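(* Let $P,Q$ be persistence diagrams satisfying the standing assumptions, and let $d_T^{per}(P,Q)$ be defined from the randomly shifted quadtree as in the context. Then there is an absolute constant $C'$ such that $$\mathbb{E}\big[d_T^{per}(P,Q)\big]\le C'\log\Delta\cdot d_W(P,Q),$$ the expectation being over the random shift.
   Context: A persistence diagram is a finite multiset of points in $\mathbb{R}^2$. Let $L=\{(x,x)\mid x\in\mathbb{R}\}$ be the diagonal and $\pi(p)=\big(\tfrac{p.x+p.y}{2},\tfrac{p.x+p.y}{2}\big)$. An augmented matching for finite multisets $A,B\subset\mathbb{R}^2$ is a subset $\Gamma\subset (A\cup\pi(B))\times(B\cup\pi(A))$ such that each element of $A$ and of $B$ (with multiplicity) appears in exactly one pair, and each pair $(a,b)$ is of the form (1) $a\in A,b\in B$, (2) $a\in A,b=\pi(a)$, or (3) $a=\pi(b),b\in B$. $d_W(P,Q)=\min_\Gamma\sum_{(p,q)\in\Gamma}\|p-q\|_2$ over augmented matchings for $P,Q$. Standing assumptions: with $X=P\uplus Q$, the minimum distance between distinct points of $X$ is $1$, the minimum distance from any point of $X$ to $L$ is $1$, $X\subseteq[0,\Delta]^2$ with $\Delta$ (the spread of $X$) a power of $2$. Randomly shifted quadtree: $H$ is $[-\Delta,\Delta]^2$ translated by a random vector with coordinates chosen uniformly in $[0,\Delta]$. For $i=-1,0,\dots,\log_2\Delta$, $G_i$ is the grid of cells of side $2^i$ obtained by repeatedly halving $H$ in each coordinate. A cell is terminal if it intersects $L$. With $P(c),Q(c)$ the number of points of $P$, $Q$ in cell $c$, $$d_T^{per}(P,Q)=\sum_{i=-1}^{\log_2\Delta}2^i\sum_{c\in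 G_i,\ c\text{ non-terminal}}|P(c)-Q(c)|.$$ *)

From HB Require Import structures.
From mathcomp Require Import all_boot all_order all_algebra.
From mathcomp Require Import all_classical all_reals all_analysis.
Set Implicit Arguments. Unset Strict Implicit. Unset Printing Implicit Defensive.
Import Order.TTheory GRing.Theory Num.Theory.
Local Open Scope ring_scope.

Section PD.
Variable R : realType.

(* A pt of R^2. Persistence diagrams are finite multisets, encoded as seqs
   (multiplicity = number of occurrences). *)
Definition pt := (R * R)%type.

Definition dist2 (p q : pt) : R :=
  Num.sqrt ((p.1 - q.1) ^+ 2 + (p.2 - q.2) ^+ 2).

Definition proj (p : pt) : pt :=
  ((p.1 + p.2) / 2, (p.1 + p.2) / 2).

Definition distL (p : pt) : R := dist2 p (proj p).

(* An augmented matching between P (size m) and Q (size n) is encoded by a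
   partial injection f : 'I_m -> option 'I_n: f i = Some j means the pair
   (P_i, Q_j) (type (1)); f i = None means (P_i, pi(P_i)) (type (2)); every
   Q_j not in the image of f is paired as (pi(Q_j), Q_j) (type (3)). *)
Definition is_aug_matching (m n : nat) (f : {ffun 'I_m -> option 'I_n}) : bool :=
  [forall i, forall i', (f i != None) ==> (f i == f i') ==> (i == i')].

Definition matching_cost (P Q : seq pt)
    (f : {ffun 'I_(size P) -> option 'I_(size Q)}) : R :=
  \sum_(i < size P)
     (match f i with
      | Some j => dist2 (nth (0,0) P i) (nth (0,0) Q j)
      | None => dist2 (nth (0,0) P i) (proj (nth (0,0) P i))
      end)
  + \sum_(j < size Q | [forall i, f i != Some j])
      dist2 (proj (nth (0,0) Q j)) (nth (0,0) Q j).

Definition empty_matching (m n : nat) : {ffun 'I_m -> option 'I_n} :=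
  [ffun=> None].

(* d_W(P,Q): minimum of the cost over all augmented matchings (the set is finite
   and contains the empty matching, used as the seed of the iterated min). *)
Definition dW (P Q : seq pt) : R :=
  \big[Order.min/@matching_cost P Q (empty_matching _ _)]_(f | is_aug_matching f)
     @matching_cost P Q f.

(* Levels i = -1..k are indexed by j : 'I_(k+2) with i = j - 1,
   so the side of a cell at level j is 2^j / 2 = 2^i, and each axis of
   H = [-Delta,Delta]^2 + (a,b) is split into 2^(k+2-j) = 2 Delta / 2^i cells. *)
Definition Delta (k : nat) : R := 2 ^+ k.
Definition side (j : nat) : R := 2 ^+ j / 2.
Definition ncells (k j : nat) : nat := 2 ^ (k + 2 - j).

Definition in_cell (k j u v : nat) (a b : R) (p : pt) : bool :=
  [&& a - Delta k + u%:R * side j <= p.1 ,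
      p.1 < a - Delta k + u.+1%:R * side j ,
      b - Delta k + v%:R * side j <= p.2 &
      p.2 < b - Delta k + v.+1%:R * side j].

Definition terminal (k j u v : nat) (a b : R) : Prop :=
  exists x : R, in_cell k j u v a b (x, x).

Definition cnt (k j u v : nat) (a b : R) (P : seq pt) : nat :=
  count (in_cell k j u v a b) P.

Definition cell_term (k j u v : nat) (a b : R) (P Q : seq pt) : R :=
  if `[< terminal k j u v a b >] then 0
  else `| (cnt k j u v a b P)%:R - (cnt k j u v a b Q)%:R |.

Definition dTper (k : nat) (a b : R) (P Q : seq pt) : R :=
  \sum_(j < k.+2) side j *
    \sum_(u < ncells k j) \sum_(v < ncells k j) cell_term k j u v a b P Q.

Definition in_box (k : nat) (p : pt) : bool :=
  (0 <= p.1 <= Delta k) && (0 <= p.2 <= Delta k).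

Definition min_sep_is_1 (X : seq pt) : Prop :=
  (forall p q, p \in X -> q \in X -> p != q -> 1 <= dist2 p q) /\
  ((exists p q, [/\ p \in X, q \in X & p != q]) ->
     exists p q, [/\ p \in X, q \in X, p != q & dist2 p q = 1]).

Definition min_distL_is_1 (X : seq pt) : Prop :=
  (forall p, p \in X -> 1 <= distL p) /\
  (X != [::] -> exists p, p \in X /\ distL p = 1).

Definition standing_assumptions (k : nat) (P Q : seq pt) : Prop :=
  let X := P ++ Q in
  [/\ min_sep_is_1 X, min_distL_is_1 X & all (in_box k) X].

End PD.

(* Fix an optimal augmented matching f. A level-i cell of the shifted quadtree
   counts a matched pair (p, q) only if a level-i grid line passes between their
   x- or y-coordinates, and a non-terminal cell, lying off the diagonal, contains
   a point p only if a vertical grid line passes between p.1 and p.2. So for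
   every shift (a, b), d_T^per is bounded by G1(a) + G2(b), where G1 and G2 sum,
   with weight 2^i, the numbers of grid lines crossed by the coordinate segments
   of f. A single line falls between x and y for a set of shifts of measure
   |x - y|, and level i has about 2 Delta / 2^i lines, so every level contributes
   at most 3 Delta^2 |x - y| to the double integral; summing over the
   log Delta + 2 levels gives E[d_T^per] <= 12 (log Delta + 2) d_W(P, Q). When
   log Delta = 0 the standing assumptions leave no point at all. *)

From HB Require Import structures.
From mathcomp Require Import all_boot all_order all_algebra.
From mathcomp Require Import all_classical all_reals all_analysis.
From mathcomp Require Import measurable_realfun lra ring.
Set Implicit Arguments. Unset Strict Implicit. Unset Printing Implicit Defensive.
Import Order.TTheory GRing.Theory Num.Theory.
Local Open Scope ring_scope.

Section integral_bounds.
Variable R : realType.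
Local Notation mu := (@lebesgue_measure R).

(* Unlike [ge0_le_integral], no measurability is required: the integral of a
   nonnegative function is a supremum over the simple functions below it. *)
Lemma ge0_le_integral_nomeas (D : set R) (f g : R -> \bar R) :
  (forall x, D x -> (0 <= f x)%E) -> (forall x, D x -> (f x <= g x)%E) ->
  (\int[mu]_(x in D) f x <= \int[mu]_(x in D) g x)%E.
Proof.
move=> f0 fg; have g0 x (Dx : D x) : (0 <= g x)%E := le_trans (f0 x Dx) (fg x Dx).
rewrite ge0_integralE // [X in (_ <= X)%E]ge0_integralE //.
apply: ereal_sup_le => _ [h /= hf <-]; exists h => //= x.
by apply: le_trans (hf x) _; rewrite /patch; case: ifP => // /set_mem /fg.
Qed.

Definition integral_bounded (D : set R) (g : R -> R) (B : R) :=
  [/\ measurable_fun D g, (forall x, D x -> 0 <= g x) &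
     (\int[mu]_(x in D) (g x)%:E <= B%:E)%E].

Variable D : set R.
Hypothesis mD : measurable D.

Lemma integral_bounded_eq g g' B :
  g =1 g' -> integral_bounded D g B -> integral_bounded D g' B.
Proof. by move=> /funext ->. Qed.

Lemma integral_bounded_le g B B' :
  B <= B' -> integral_bounded D g B -> integral_bounded D g B'.
Proof. by move=> BB' [mg g0 ig]; split => //; apply: le_trans ig _; rewrite lee_fin. Qed.

Lemma integral_bounded0 : integral_bounded D (fun=> 0) 0.
Proof. by split => //; rewrite integral0_eq. Qed.

Lemma integral_boundedD g1 g2 B1 B2 :
  integral_bounded D g1 B1 -> integral_bounded D g2 B2 ->
  integral_bounded D (fun x => g1 x + g2 x) (B1 + B2).
Proof.
move=> [m1 p1 i1] [m2 p2 i2]; split.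
- exact: measurable_funD.
- by move=> x Dx; rewrite addr_ge0 ?p1 ?p2.
- under eq_integral do rewrite EFinD.
  rewrite ge0_integralD //; first by rewrite EFinD leeD.
  all: exact/measurable_EFinP.
Qed.

Lemma integral_boundedZ c g B : 0 <= c ->
  integral_bounded D g B -> integral_bounded D (fun x => c * g x) (c * B).
Proof.
move=> c0 [mg g0 ig]; split.
- exact: measurable_funM.
- by move=> x Dx; rewrite mulr_ge0 ?g0.
- under eq_integral do rewrite EFinM.
  rewrite ge0_integralZl //; first by rewrite EFinM lee_wpmul2l // lee_fin.
  exact/measurable_EFinP.
Qed.

Lemma integral_bounded_sum (I : Type) (r : seq I) (P : pred I) g B :
  (forall i, P i -> integral_bounded D (g i) (B i)) ->
  integral_bounded D (fun x => \sum_(i <- r | P i) g i x) (\sum_(i <- r | P i) B i).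
Proof.
move=> gB; elim: r => [|i r IH].
  by rewrite big_nil; apply: integral_bounded_eq integral_bounded0 => x; rewrite big_nil.
rewrite big_cons; case: ifP => Pi.
  by apply: integral_bounded_eq (integral_boundedD (gB _ Pi) IH) => x; rewrite big_cons Pi.
by apply: integral_bounded_eq IH => x; rewrite big_cons Pi.
Qed.

Lemma integral_bounded_itv_oc (l r : R) : l <= r ->
  integral_bounded D (fun x => (x \in `]l, r])%:R) (r - l).
Proof.
move=> lr; apply: (@integral_bounded_eq (\1_(`]l, r]%classic))).
  move=> x; rewrite indicE; have [h|h] := boolP (x \in `]l, r]).
    by rewrite mem_set.
  by rewrite memNset //; apply/negP.
split => //.
rewrite integral_indic //; apply: le_trans (measureIl _ _ _) _ => //.
change (lebesgue_measure (`]l, r]%classic : set R) <= (r - l)%:E)%E.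
by rewrite lebesgue_measure_itv /= lte_fin; case: ltP; rewrite ?lee_fin ?subr_ge0 // -EFinD.
Qed.

Lemma integral_bounded_cst l c : mu D = l%:E -> 0 <= c ->
  integral_bounded D (fun=> c) (l * c).
Proof.
by move=> muD c0; split => //; rewrite integral_cst // mulrC EFinM -muD.
Qed.

Lemma integral2_le_separable l (F : R -> R -> R) G1 G2 B1 B2 :
  mu D = l%:E -> (forall a b, 0 <= F a b) -> (forall a b, F a b <= G1 a + G2 b) ->
  integral_bounded D G1 B1 -> integral_bounded D G2 B2 ->
  (\int[mu]_(a in D) \int[mu]_(b in D) (F a b)%:E <= ((B1 + B2) * l)%:E)%E.
Proof.
move=> muD F0 FG g1 g2; have l0 : 0 <= l by rewrite -lee_fin -muD measure_ge0.
have [_ G10 _] := g1; have [_ G20 i2] := g2.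
have B20 : 0 <= B2.
  by rewrite -lee_fin; apply: le_trans i2; apply: integral_ge0 => x Dx; rewrite lee_fin G20.
have inner a : D a -> integral_bounded D (fun b => G1 a + G2 b) (l * G1 a + B2).
  by move=> Da; apply: integral_boundedD g2; apply: integral_bounded_cst; rewrite ?G10.
have outer : integral_bounded D (fun a => l * G1 a + B2) (l * B1 + l * B2).
  by apply: integral_boundedD; [exact: integral_boundedZ | exact: integral_bounded_cst].
have [_ _ I] := outer; rewrite [(B1 + B2) * l]mulrC mulrDr; apply: le_trans I.
apply: ge0_le_integral_nomeas => [a _|a Da].
  by apply: integral_ge0 => b _; rewrite lee_fin.
have [_ _ I] := inner a Da; apply: le_trans I.
by apply: ge0_le_integral_nomeas => b _; rewrite lee_fin.
Qed.

End integral_bounds.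

Section matching_sum.
Variables (R : realType) (m n : nat) (f : {ffun 'I_m -> option 'I_n}).

Definition unmatched (j : 'I_n) : bool := [forall i, f i != Some j].

Definition match_sum (c : 'I_m -> 'I_n -> R) (cP : 'I_m -> R) (cQ : 'I_n -> R) : R :=
  \sum_i (match f i with Some j => c i j | None => cP i end)
  + \sum_(j | unmatched j) cQ j.

Lemma ler_match_sum c c' cP cP' cQ cQ' :
  (forall i j, c i j <= c' i j) -> (forall i, cP i <= cP' i) -> (forall j, cQ j <= cQ' j) ->
  match_sum c cP cQ <= match_sum c' cP' cQ'.
Proof.
move=> cc' cPP' cQQ'; rewrite lerD ?ler_sum // => i _.
by case: (f i).
Qed.

Lemma match_sum_ge0 c cP cQ :
  (forall i j, 0 <= c i j) -> (forall i, 0 <= cP i) -> (forall j, 0 <= cQ j) ->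
  0 <= match_sum c cP cQ.
Proof.
move=> c0 cP0 cQ0; rewrite addr_ge0 ?sumr_ge0 // => i _.
by case: (f i).
Qed.

Lemma match_sum_sum (I : Type) (r : seq I) c cP cQ :
  match_sum (fun i j => \sum_(x <- r) c x i j) (fun i => \sum_(x <- r) cP x i)
    (fun j => \sum_(x <- r) cQ x j)
  = \sum_(x <- r) match_sum (c x) (cP x) (cQ x).
Proof.
rewrite /match_sum big_split /= exchange_big [in RHS]exchange_big /=.
by congr (_ + _); apply: eq_bigr => i _; case: (f i).
Qed.

Lemma match_sumD c1 c2 cP1 cP2 cQ1 cQ2 :
  match_sum (fun i j => c1 i j + c2 i j) (fun i => cP1 i + cP2 i) (fun j => cQ1 j + cQ2 j)
  = match_sum c1 cP1 cQ1 + match_sum c2 cP2 cQ2.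
Proof.
rewrite /match_sum !big_split /= addrACA; congr (_ + _).
by rewrite -big_split; apply: eq_bigr => i _; case: (f i).
Qed.

Lemma match_sumZ a c cP cQ :
  match_sum (fun i j => a * c i j) (fun i => a * cP i) (fun j => a * cQ j)
  = a * match_sum c cP cQ.
Proof.
rewrite /match_sum mulrDr !mulr_sumr; congr (_ + _).
by apply: eq_bigr => i _; case: (f i).
Qed.

Section on_a_domain.
Variables (D : set R) (mD : measurable D).

Lemma integral_bounded_match_sum c cP cQ B BP BQ :
  (forall i j, integral_bounded D (c i j) (B i j)) ->
  (forall i, integral_bounded D (cP i) (BP i)) ->
  (forall j, integral_bounded D (cQ j) (BQ j)) ->
  integral_bounded D (fun t => match_sum (fun i j => c i j t) (fun i => cP i t) (fun j => cQ j t))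
    (match_sum B BP BQ).
Proof.
move=> cB cPB cQB; apply: integral_boundedD => //; apply: integral_bounded_sum => // i _.
by case: (f i).
Qed.

End on_a_domain.

Hypothesis f_matching : is_aug_matching f.

Lemma sum_matched (F : 'I_n -> R) :
  \sum_i (match f i with Some j => F j | None => 0 end) = \sum_(j | ~~ unmatched j) F j.
Proof.
transitivity (\sum_i \sum_j (f i == Some j)%:R * F j).
  apply: eq_bigr => i _; case: (f i) => [j0|]; last by rewrite big1 // => j _; rewrite mul0r.
  rewrite (bigD1 j0) //= eqxx mul1r big1 ?addr0 // => j /negbTE nj.
  by rewrite (inj_eq (@Some_inj _)) eq_sym nj mul0r.
rewrite exchange_big [RHS]big_mkcond /=; apply: eq_bigr => j _.
case: (boolP (unmatched j)) => [/forallP unm|].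
  by rewrite big1 // => i _; rewrite (negbTE (unm i)) mul0r.
rewrite negb_forall => /existsP[i0 /negPn /eqP fi0].
rewrite (bigD1 i0) //= fi0 eqxx mul1r big1 ?addr0 // => i ni0.
case: eqP => [fi|]; last by rewrite mul0r.
move/forallP/(_ i0)/forallP/(_ i): f_matching.
by rewrite fi0 fi eqxx /= => /eqP i0i; rewrite i0i eqxx in ni0.
Qed.

Lemma ler_norm_match_sum (eP : 'I_m -> R) (eQ : 'I_n -> R) :
  `|\sum_i eP i - \sum_j eQ j|
    <= match_sum (fun i j => `|eP i - eQ j|) (fun i => `|eP i|) (fun j => `|eQ j|).
Proof.
rewrite (bigID unmatched) /= -sum_matched addrC opprD addrA -sumrB.
apply: le_trans (ler_normB _ _) _; apply: lerD; last exact: ler_norm_sum.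
apply: le_trans (ler_norm_sum _ _ _) _; apply: ler_sum => i _.
by case: (f i) => [j|]; rewrite ?subr0.
Qed.

End matching_sum.

Section grid_crossings.
Variable R : realType.
Implicit Types (o s x y z L : R) (n u v : nat).

Lemma normB_max_min x y : `|x - y| = Num.max x y - Num.min x y.
Proof.
case: (leP x y) => xy; first by rewrite distrC ger0_norm ?subr_ge0.
by rewrite ger0_norm ?subr_ge0 ?ltW.
Qed.

Definition separates x y L : bool := L \in `]Num.min x y, Num.max x y].

Lemma separatesC x y L : separates x y L = separates y x L.
Proof. by rewrite /separates minC maxC. Qed.

Lemma separates_lt x y L : x < L <= y -> separates x y L.
Proof.
move=> /andP[xL Ly]; have xy : x <= y by rewrite ltW // (lt_le_trans xL).
by rewrite /separates in_itv /= min_l // max_r // xL.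
Qed.

Definition strip o s u x : bool := (o + u%:R * s <= x) && (x < o + u.+1%:R * s).

Definition crossings o s n x y : R := \sum_(u < n.+1) (separates x y (o + u%:R * s))%:R.

Lemma strip_inj o s x u u' : 0 < s -> strip o s u x -> strip o s u' x -> u = u'.
Proof.
move=> s0 /andP[lo hi] /andP[lo' hi'].
have le_u m m' : o + m%:R * s <= x -> x < o + m'.+1%:R * s -> (m <= m')%N.
  by move=> l h; rewrite -ltnS -(ltr_nat R) -(ltr_pM2r s0); lra.
by apply/eqP; rewrite eqn_leq !le_u.
Qed.

Lemma crossingsC o s n x y : crossings o s n x y = crossings o s n y x.
Proof. by apply: eq_bigr => u _; rewrite separatesC. Qed.

Lemma crossings_ge0 o s n x y : 0 <= crossings o s n x y.
Proof. by apply: sumr_ge0 => u _; rewrite ler0n. Qed.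

Lemma crossings_ge1 o s n x y u : (u <= n)%N ->
  separates x y (o + u%:R * s) -> 1 <= crossings o s n x y.
Proof.
rewrite -ltnS => un sep; rewrite /crossings (bigD1 (Ordinal un)) //= sep.
by rewrite lerDl sumr_ge0 // => i _; rewrite ler0n.
Qed.

Lemma strip_crossing o s n x y u : (u < n)%N ->
  strip o s u x -> ~~ strip o s u y -> 1 <= crossings o s n x y.
Proof.
move=> un /andP[lo hi]; rewrite negb_and -!ltNge -leNgt => /orP[yl|hy].
  by apply: (@crossings_ge1 _ _ _ _ _ u); rewrite 1?ltnW // separatesC separates_lt ?yl.
by apply: (@crossings_ge1 _ _ _ _ _ u.+1); rewrite // separates_lt ?hi.
Qed.

(* A square cell missing the diagonal lies strictly above or below it, so a
   vertical grid line separates the coordinates of any of its points. *)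
Lemma off_diagonal_crossing o o' s n x y u v : (u < n)%N ->
  strip o s u x -> strip o' s v y -> (forall z, ~~ (strip o s u z && strip o' s v z)) ->
  1 <= crossings o s n x y.
Proof.
move=> un /andP[xlo xhi] /andP[ylo yhi] off.
case: (leP (o + u.+1%:R * s) (o' + v%:R * s)) => [above|nabove].
  by apply: (@crossings_ge1 _ _ _ _ _ u.+1) => //; rewrite separates_lt // xhi (le_trans above).
case: (leP (o' + v.+1%:R * s) (o + u%:R * s)) => [below|nbelow].
  apply: (@crossings_ge1 _ _ _ _ _ u); rewrite 1?ltnW // separatesC separates_lt //.
  by rewrite xlo (lt_le_trans yhi).
have [z [zx zy]] : exists z, strip o s u z /\ strip o' s v z.
  move: nabove nbelow ylo yhi; rewrite /strip -!natr1 !mulrDl !mul1r.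
  set A := o + u%:R * s; set B := o' + v%:R * s; rewrite !addrA -/A -/B => nab nbe ylo yhi.
  case: (leP A B) => AB; [exists B | exists A]; rewrite !lexx /=.
    by split; [apply/andP; split|]; lra.
  by split; [|apply/andP; split]; lra.
by move: (off z); rewrite zx zy.
Qed.

Lemma integral_bounded_crossings (D : set R) (mD : measurable D) c s n x y :
  integral_bounded D (fun t => crossings (t + c) s n x y) (n.+1%:R * `|x - y|).
Proof.
apply: (@integral_bounded_le _ _ _ (\sum_(u < n.+1) `|x - y|)).
  by rewrite sumr_const card_ord mulr_natl.
apply: (@integral_bounded_eq _ _ (fun t => \sum_(u < n.+1)
  (t \in `]Num.min x y - c - u%:R * s, Num.max x y - c - u%:R * s])%:R)).
  move=> t; apply: eq_bigr => u _; rewrite /separates !in_itv /=.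
  by congr (nat_of_bool _)%:R; apply/andP/andP => -[l h]; split; lra.
apply: integral_bounded_sum => // u _; rewrite normB_max_min.
have -> : Num.max x y - Num.min x y
  = Num.max x y - c - u%:R * s - (Num.min x y - c - u%:R * s) by lra.
by apply: integral_bounded_itv_oc => //; rewrite !lerD2r; case: (leP x y) => [|/ltW].
Qed.

End grid_crossings.

Lemma sum_le_card_le1 (R : numDomainType) (I : finType) (A : pred I) (F : I -> R) W :
  (#|A| <= 1)%N -> 0 <= W -> (forall i, F i <= (A i)%:R * W) -> \sum_i F i <= W.
Proof.
move=> A1 W0 FA; apply: le_trans (ler_sum _ (fun i _ => FA i)) _.
rewrite -mulr_suml -natr_sum ler_piMl // lern1 (leq_trans _ A1) //.
by rewrite -sum1_card [leqRHS]big_mkcond.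
Qed.

Lemma count_sum (R : numDomainType) (T : Type) (x0 : T) (a : pred T) (s : seq T) :
  (count a s)%:R = \sum_(i < size s) (a (nth x0 s i))%:R :> R.
Proof. by elim: s => [|x s IH]; rewrite ?big_ord0 // big_ord_recl /= natrD IH. Qed.

Lemma side_gt0 (R : realType) j : 0 < side R j.
Proof. by rewrite divr_gt0 // exprn_gt0. Qed.

Section level.
Variables (R : realType) (k j : nat) (a b : R).
Local Notation cell := ('I_(ncells k j) * 'I_(ncells k j))%type.
Local Notation incell c p := (in_cell k j c.1 c.2 a b p).
Local Notation xstrip := (strip (a - Delta R k) (side R j)).
Local Notation ystrip := (strip (b - Delta R k) (side R j)).
Local Notation xcross := (crossings (a - Delta R k) (side R j) (ncells k j)).
Local Notation ycross := (crossings (b - Delta R k) (side R j) (ncells k j)).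

Lemma in_cellE u v p : in_cell k j u v a b p = xstrip u p.1 && ystrip v p.2.
Proof. by rewrite /in_cell /strip !andbA. Qed.

Lemma card_cells_le1 p : (#|[pred c : cell | incell c p]| <= 1)%N.
Proof.
apply/card_le1_eqP => -[u v] [u' v']; rewrite !inE /= !in_cellE.
move=> /andP[pu pv] /andP[pu' pv'].
by congr pair; apply: val_inj; apply: (strip_inj (side_gt0 R j)); eassumption.
Qed.

Lemma sum_cell_diff p q :
  \sum_(c : cell) `|(incell c p)%:R - (incell c q)%:R|
    <= 2 * (xcross p.1 q.1 + ycross p.2 q.2).
Proof.
have one_way p' q' : \sum_(c : cell) (incell c p' && ~~ incell c q')%:R
    <= xcross p'.1 q'.1 + ycross p'.2 q'.2.
  apply: sum_le_card_le1 (card_cells_le1 p') _ _; first by rewrite addr_ge0 ?crossings_ge0.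
  move=> [u v] /=; have [pin|_] := boolP (incell (u, v) p'); last by rewrite mul0r.
  move: pin; rewrite !in_cellE negb_and mul1r => /andP[pu pv].
  case: orP => [[qu|qv]|_]; last by rewrite addr_ge0 ?crossings_ge0.
    by apply: le_trans (strip_crossing (ltn_ord u) pu qu) _; rewrite lerDl crossings_ge0.
  by apply: le_trans (strip_crossing (ltn_ord v) pv qv) _; rewrite lerDr crossings_ge0.
apply: le_trans (_ : \sum_(c : cell)
    ((incell c p && ~~ incell c q)%:R + (incell c q && ~~ incell c p)%:R) <= _).
  apply: ler_sum => c _.
  case: (incell c p); case: (incell c q) => /=;
    by rewrite ?subrr ?normr0 ?subr0 ?sub0r ?normrN ?normr1 ?addr0 ?add0r.
rewrite big_split /=; apply: le_trans (lerD (one_way p q) (one_way q p)) _.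
by rewrite (crossingsC _ _ _ q.1) (crossingsC _ _ _ q.2) mulr_natl mulr2n.
Qed.

Lemma sum_nonterminal_cells p :
  \sum_(c : cell) (~~ `[< terminal k j c.1 c.2 a b >])%:R * (incell c p)%:R
    <= xcross p.1 p.2.
Proof.
apply: sum_le_card_le1 (card_cells_le1 p) (crossings_ge0 _ _ _ _ _) _ => -[u v] /=.
rewrite mulrC; have [pin|_] := boolP (incell (u, v) p); last by rewrite !mul0r.
rewrite !mul1r; case: asboolP => [_|nterm]; first by rewrite crossings_ge0.
move: pin; rewrite in_cellE => /andP[pu pv].
apply: (off_diagonal_crossing (ltn_ord u) pu pv) => z; apply/negP => zz.
by apply: nterm; exists z; rewrite in_cellE.
Qed.

Variables (P Q : seq (pt R)) (f : {ffun 'I_(size P) -> option 'I_(size Q)}).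
Hypothesis f_matching : is_aug_matching f.
Local Notation Pn i := (nth (0, 0) P i).
Local Notation Qn i := (nth (0, 0) Q i).

Lemma level_bound :
  \sum_(u < ncells k j) \sum_(v < ncells k j) cell_term k j u v a b P Q
  <= match_sum f (fun i q => 2 * (xcross (Pn i).1 (Qn q).1 + ycross (Pn i).2 (Qn q).2))
       (fun i => xcross (Pn i).1 (Pn i).2) (fun q => xcross (Qn q).1 (Qn q).2).
Proof.
pose nt (c : cell) : R := (~~ `[< terminal k j c.1 c.2 a b >])%:R.
have cell_le (c : cell) : cell_term k j c.1 c.2 a b P Q
    <= match_sum f (fun i q => `|(incell c (Pn i))%:R - (incell c (Qn q))%:R|)
         (fun i => nt c * (incell c (Pn i))%:R) (fun q => nt c * (incell c (Qn q))%:R).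
  rewrite /cell_term /nt; case: asboolP => _ /=.
    by apply: match_sum_ge0 => *; rewrite ?mul0r.
  rewrite /cnt !(count_sum _ (0, 0)); apply: le_trans (ler_norm_match_sum f_matching _ _) _.
  by apply: ler_match_sum => *; rewrite /= ?mul1r ?normr_nat.
rewrite pair_bigA /=; apply: le_trans (ler_sum _ (fun c _ => cell_le c)) _.
rewrite -match_sum_sum; apply: ler_match_sum => [i q|i|q].
- exact: sum_cell_diff.
- exact: sum_nonterminal_cells.
- exact: sum_nonterminal_cells.
Qed.

End level.

Section diagram_geometry.
Variable R : realType.
Implicit Types p q : pt R.

Lemma dist2C p q : dist2 p q = dist2 q p.
Proof. by rewrite /dist2 -sqrrN opprB -[(p.2 - q.2) ^+ 2]sqrrN opprB. Qed.

Lemma ler_dist2_fst p q : `|p.1 - q.1| <= dist2 p q.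
Proof. by rewrite -sqrtr_sqr ler_sqrt ?lerDl ?sqr_ge0 // addr_ge0 ?sqr_ge0. Qed.

Lemma ler_dist2_snd p q : `|p.2 - q.2| <= dist2 p q.
Proof. by rewrite -sqrtr_sqr ler_sqrt ?lerDr ?sqr_ge0 // addr_ge0 ?sqr_ge0. Qed.

Lemma distL_sqr p : distL p ^+ 2 = (p.1 - p.2) ^+ 2 / 2.
Proof. by rewrite sqr_sqrtr ?addr_ge0 ?sqr_ge0 //= /proj /=; field. Qed.

Lemma ler_distL p : `|p.1 - p.2| <= 2 * distL p.
Proof.
rewrite -(ler_pXn2r (isT : (0 < 2)%N)) ?nnegrE ?mulr_ge0 ?sqrtr_ge0 //.
by rewrite exprMn distL_sqr real_normK ?num_real //; have := sqr_ge0 (p.1 - p.2); lra.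
Qed.

Lemma distL_lt1 p : in_box 0 p -> distL p < 1.
Proof.
rewrite /in_box /Delta expr0 => /andP[/andP[x0 x1] /andP[y0 y1]].
rewrite -(ltr_pXn2r (isT : (0 < 2)%N)) ?nnegrE ?sqrtr_ge0 // expr1n distL_sqr.
have lo : -1 <= p.1 - p.2 by lra.
have hi : p.1 - p.2 <= 1 by lra.
nra.
Qed.

End diagram_geometry.

Section matching_cost.
Variables (R : realType) (P Q : seq (pt R)).
Local Notation Pn i := (nth (0, 0) P i).
Local Notation Qn i := (nth (0, 0) Q i).

Lemma matching_costE (f : {ffun 'I_(size P) -> option 'I_(size Q)}) :
  matching_cost f
  = match_sum f (fun i j => dist2 (Pn i) (Qn j)) (fun i => distL (Pn i)) (fun j => distL (Qn j)).
Proof. by congr (_ + _); apply: eq_bigr => j _; rewrite dist2C. Qed.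

Lemma matching_cost_ge0 (f : {ffun 'I_(size P) -> option 'I_(size Q)}) :
  0 <= matching_cost f.
Proof. by rewrite matching_costE match_sum_ge0 // => *; rewrite sqrtr_ge0. Qed.

Lemma dW_attained : exists2 f : {ffun 'I_(size P) -> option 'I_(size Q)},
  is_aug_matching f & dW P Q = matching_cost f.
Proof.
apply: (big_ind (fun x => exists2 f, is_aug_matching f & x = matching_cost f)).
- by exists (empty_matching _ _) => //; apply/forallP => i; apply/forallP => i'; rewrite ffunE.
- by move=> x y [fx hx ->] [fy hy ->]; case: leP => _; [exists fx | exists fy].
- by move=> f hf; exists f.
Qed.

Lemma standing_assumptions0 : standing_assumptions 0 P Q -> P = [::] /\ Q = [::].
Proof.
case=> _ [distL_ge1 _] /allP in_box0.
have nilX : P ++ Q = [::].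
  case: (P ++ Q) distL_ge1 in_box0 => // p X geq1 box.
  by have := distL_lt1 (box p (mem_head _ _)); rewrite ltNge geq1 ?mem_head.
by case: P nilX => [/= ->|].
Qed.

End matching_cost.

Section expectation.
Variables (R : realType) (k : nat).
Local Notation Dk := (Delta R k).
Local Notation D := (`[0%R, Dk]%classic : set R).

Lemma Delta_gt0 : 0 < Dk.
Proof. by rewrite exprn_gt0. Qed.

Lemma lebesgue_measure_shifts : lebesgue_measure D = Dk%:E.
Proof. by rewrite lebesgue_measure_itv /= lte_fin Delta_gt0 oppr0 adde0. Qed.

Lemma side_ncells_le j : (j < k.+2)%N -> side R j * (ncells k j).+1%:R <= 3 * Dk.
Proof.
move=> jk; rewrite -natr1 mulrDr mulr1 /side /ncells natrX.
have -> : 2 ^+ j / 2 * (2 : R) ^+ (k + 2 - j) = 2 * Dk.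
  rewrite mulrAC -exprD subnKC; last by rewrite addn2 ltnW.
  by rewrite /Delta addn2 !exprS; field.
suff : 2 ^+ j / 2 <= Dk by lra.
by rewrite ler_pdivrMr // -exprSr ler_eXn2l // ltr1n.
Qed.

Lemma sum_side_ncells : \sum_(j < k.+2) side R j * (ncells k j).+1%:R <= 3 * k.+2%:R * Dk.
Proof.
apply: le_trans (ler_sum _ (fun j _ => side_ncells_le (ltn_ord j))) _.
by rewrite sumr_const card_ord [leRHS]mulrAC mulr_natr.
Qed.

Variables (P Q : seq (pt R)) (f : {ffun 'I_(size P) -> option 'I_(size Q)}).
Hypothesis f_matching : is_aug_matching f.
Local Notation Pn i := (nth (0, 0) P i).
Local Notation Qn i := (nth (0, 0) Q i).
Local Notation cross j t := (crossings (t - Dk) (side R j) (ncells k j)).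

(* The diagonal terms are only needed for [pr = fst]; for [snd] they are a
   harmless nonnegative surplus that lets both shifts share one bound. *)
Definition crossing_cost (pr : pt R -> R) (t : R) : R :=
  \sum_(j < k.+2) side R j * match_sum f
    (fun i q => 2 * cross j t (pr (Pn i)) (pr (Qn q)))
    (fun i => cross j t (Pn i).1 (Pn i).2) (fun q => cross j t (Qn q).1 (Qn q).2).

Definition coord_cost (pr : pt R -> R) : R :=
  match_sum f (fun i q => 2 * `|pr (Pn i) - pr (Qn q)|)
    (fun i => `|(Pn i).1 - (Pn i).2|) (fun q => `|(Qn q).1 - (Qn q).2|).

Lemma dTper_ge0 a b : 0 <= dTper k a b P Q.
Proof.
apply: sumr_ge0 => j _; rewrite mulr_ge0 ?(ltW (side_gt0 _ _)) //.
by do 2![apply: sumr_ge0 => ? _]; rewrite /cell_term; case: ifP.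
Qed.

Lemma dTper_le_crossing_cost a b :
  dTper k a b P Q <= crossing_cost fst a + crossing_cost snd b.
Proof.
rewrite /dTper -big_split; apply: ler_sum => j _ /=.
rewrite -mulrDr ler_pM2l ?side_gt0 // -match_sumD.
apply: le_trans (level_bound k j a b f_matching) _.
by apply: ler_match_sum => *; rewrite ?mulrDr // lerDl crossings_ge0.
Qed.

Lemma integral_bounded_crossing_cost pr :
  integral_bounded D (crossing_cost pr) (3 * k.+2%:R * Dk * coord_cost pr).
Proof.
have cost0 : 0 <= coord_cost pr by apply: match_sum_ge0 => *; rewrite ?mulr_ge0.
apply: (@integral_bounded_le _ _ _
  (\sum_(j < k.+2) side R j * ((ncells k j).+1%:R * coord_cost pr))).
  under eq_bigr do rewrite mulrA.
  by rewrite -mulr_suml ler_wpM2r // sum_side_ncells.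
apply: integral_bounded_sum => // j _; apply: integral_boundedZ; rewrite ?(ltW (side_gt0 _ _)) //.
rewrite -match_sumZ; apply: integral_bounded_match_sum => // [i q|i|q].
- by rewrite mulrCA; apply: integral_boundedZ => //; exact: integral_bounded_crossings.
- exact: integral_bounded_crossings.
- exact: integral_bounded_crossings.
Qed.

Lemma coord_cost_le : coord_cost fst + coord_cost snd <= 4 * matching_cost f.
Proof.
rewrite -match_sumD matching_costE -match_sumZ; apply: ler_match_sum => [i q|i|q].
- by have := ler_dist2_fst (Pn i) (Qn q); have := ler_dist2_snd (Pn i) (Qn q); lra.
- by have := ler_distL (Pn i); lra.
- by have := ler_distL (Qn q); lra.
Qed.

Lemma expected_dTper_le :
  (((Dk ^+ 2)^-1)%:E * (\int[lebesgue_measure]_(a in D) \int[lebesgue_measure]_(b in D)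
      (dTper k a b P Q)%:E) <= (12 * k.+2%:R * matching_cost f)%:E)%E.
Proof.
have Dk0 := Delta_gt0.
have mD : measurable D by [].
have := integral2_le_separable mD lebesgue_measure_shifts dTper_ge0 dTper_le_crossing_cost
  (integral_bounded_crossing_cost fst) (integral_bounded_crossing_cost snd).
move=> /(lee_wpmul2l (_ : (0 <= (Dk ^+ 2)^-1%:E)%E)) int_le.
apply: le_trans (int_le _) _; first by rewrite lee_fin invr_ge0 exprn_ge0 ?ltW.
rewrite -EFinM lee_fin -mulrDr; set c := coord_cost fst + coord_cost snd.
have -> : Dk ^- 2 * (3 * k.+2%:R * Dk * c * Dk) = 3 * k.+2%:R * c by field; rewrite gt_eqF.
have -> : 12 * k.+2%:R * matching_cost f = 3 * k.+2%:R * (4 * matching_cost f) by ring.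
by rewrite ler_pM2l ?mulr_gt0 ?coord_cost_le.
Qed.

End expectation.
Local Open Scope classical_set_scope.

Theorem lemma9 (R : realType) :
  exists C' : R, forall (k : nat) (P Q : seq (pt R)),
    standing_assumptions k P Q ->
    (((Delta R k ^+ 2)^-1)%:E *
      (\int[@lebesgue_measure R]_(a in `[0%R, Delta R k]%classic)
         (\int[@lebesgue_measure R]_(b in `[0%R, Delta R k]%classic)
            (dTper k a b P Q)%:E))
    <= (C' * k%:R * dW P Q)%:E)%E.
Proof.
exists 36 => k P Q SA.
have [f f_matching ->] := dW_attained P Q.
apply: le_trans (expected_dTper_le k f_matching) _; rewrite lee_fin.
have cost0 := matching_cost_ge0 f.
case: k SA => [|k] SA.
  have [P0 Q0] := standing_assumptions0 SA.
  have -> : matching_cost f = 0.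
    by rewrite /matching_cost !big1 ?addr0 // => -[i lt_i]; exfalso; move: lt_i; rewrite ?P0 ?Q0.
  by rewrite !mulr0.
rewrite -[k.+3]addn2 -addn1 !natrD.
have : 0 <= k%:R * matching_cost f by rewrite mulr_ge0.
nra.
Qed.
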